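(* Let $(X,d)$ be a complete metric space with $|X|\geqslant 3$, and let $T\colon X\to X$ satisfy: (i) $T$ has no periodic points of prime period $2$, i.e. $T(T(x))\neq x$ for every $x\in X$ with $Tx\neq x$; (ii) $T$ is a generalized Ćirić–Reich–Rus type mapping on $X$, i.e. there exist $\alpha,\lambda\geqslant 0$ with $2\alpha+\frac{3\lambda}{2}<1$ such that $$d(Tx,Ty)+d(Ty,Tz)+d(Tx,Tz)\leqslant \alpha\big(d(x,y)+d(y,z)+d(z,x)\big)+\lambda\big(d(x,Tx)+d(y,Ty)+d(z,Tz)\big)$$ for all pairwise distinct $x,y,z\in X$. Then $T$ has a fixed point, and $T$ has at most two fixed points. *)

From Stdlib Require Import Reals.
Open Scope R_scope.

Definition is_metric {X : Type} (d : X -> X -> R) : Prop :=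
  (forall x y, 0 <= d x y) /\
  (forall x y, d x y = 0 <-> x = y) /\
  (forall x y, d x y = d y x) /\
  (forall x y z, d x z <= d x y + d y z).

Definition cauchy_seq {X : Type} (d : X -> X -> R) (u : nat -> X) : Prop :=
  forall eps, 0 < eps -> exists N, forall m n, (N <= m)%nat -> (N <= n)%nat ->
    d (u m) (u n) < eps.

Definition converges_to {X : Type} (d : X -> X -> R) (u : nat -> X) (l : X) : Prop :=
  forall eps, 0 < eps -> exists N, forall n, (N <= n)%nat -> d (u n) l < eps.

Definition complete_metric {X : Type} (d : X -> X -> R) : Prop :=
  is_metric d /\ forall u, cauchy_seq d u -> exists l, converges_to d u l.

Definition at_least_three (X : Type) : Prop :=
  exists a b c : X, a <> b /\ b <> c /\ a <> c.

Definition no_prime_period_two {X : Type} (T : X -> X) : Prop :=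
  forall x, T x <> x -> T (T x) <> x.

Definition gen_CRR {X : Type} (d : X -> X -> R) (T : X -> X) : Prop :=
  exists alpha lambda : R, 0 <= alpha /\ 0 <= lambda /\
    2 * alpha + 3 * lambda / 2 < 1 /\
    forall x y z : X, x <> y -> y <> z -> x <> z ->
      d (T x) (T y) + d (T y) (T z) + d (T x) (T z) <=
      alpha * (d x y + d y z + d z x) + lambda * (d x (T x) + d y (T y) + d z (T z)).

Definition fixed_point {X : Type} (T : X -> X) (x : X) : Prop := T x = x.

(* The sum of the three sides of the triangle x, Tx, T^2 x contracts by the
   factor (alpha + lambda) / (1 - lambda/2) < 1 under T: the three points are
   pairwise distinct as long as the orbit has no fixed point, by (i).  Hence
   the orbit of any point is Cauchy, and the condition applied to the limit l
   and two late orbit points gives (2 - lambda) d(l, Tl) <= O(eps), so l is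
   fixed.  Three distinct fixed points x, y, z would give
   d(x,y) + d(y,z) + d(z,x) <= alpha (d(x,y) + d(y,z) + d(z,x)) with
   alpha < 1. *)
From Stdlib Require Import Reals Lra Lia Classical.
Open Scope R_scope.

Section MetricSpace.

Context {X : Type} {d : X -> X -> R}.
Hypothesis d_metric : is_metric d.

Lemma dist_ge0 x y : 0 <= d x y.
Proof. apply d_metric. Qed.

Lemma dist_xx x : d x x = 0.
Proof. apply d_metric; reflexivity. Qed.

Lemma dist_sym x y : d x y = d y x.
Proof. apply d_metric. Qed.

Lemma dist_triangle x y z : d x z <= d x y + d y z.
Proof. apply d_metric. Qed.

Lemma dist_gt0 x y : x <> y -> 0 < d x y.
Proof.
  intros Hxy; destruct (dist_ge0 x y) as [Hlt | Heq]; [exact Hlt |].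
  exfalso; apply Hxy, d_metric; auto.
Qed.

Section GeometricSteps.

Variables (u : nat -> X) (C k : R).
Hypotheses (k_ge0 : 0 <= k) (k_lt1 : k < 1).
Hypothesis step_le : forall n, d (u n) (u (S n)) <= C * k ^ n.

Lemma dist_le_geometric_tail m j :
  d (u m) (u (m + j)%nat) <= C / (1 - k) * (k ^ m - k ^ (m + j)).
Proof.
  induction j as [|j IH].
  - rewrite Nat.add_0_r, dist_xx; lra.
  - rewrite Nat.add_succ_r.
    assert (Hgap : C / (1 - k) * (k ^ (m + j) - k ^ S (m + j)) = C * k ^ (m + j))
      by (simpl; field; lra).
    pose proof (dist_triangle (u m) (u (m + j)%nat) (u (S (m + j)))).
    pose proof (step_le (m + j)).
    lra.
Qed.

Lemma dist_le_geometric m n :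
  (m <= n)%nat -> d (u m) (u n) <= C / (1 - k) * k ^ m.
Proof.
  intros Hmn; replace n with (m + (n - m))%nat by lia.
  assert (HC : 0 <= C) by (pose proof (step_le 0); pose proof (dist_ge0 (u 0) (u 1)); simpl in *; lra).
  assert (0 <= C / (1 - k) * k ^ (m + (n - m)))
    by (apply Rmult_le_pos; [apply Rle_mult_inv_pos; lra | apply pow_le; lra]).
  pose proof (dist_le_geometric_tail m (n - m)); lra.
Qed.

Lemma cauchy_of_geometric_steps : cauchy_seq d u.
Proof.
  intros eps Heps.
  set (M := C / (1 - k)).
  assert (HM : 0 <= M).
  { pose proof (dist_le_geometric 0 0 (le_n 0)) as H00; fold M in H00.
    pose proof (dist_ge0 (u 0) (u 0)); simpl in H00; lra. }
  assert (Hratio : 0 < eps / (M + 1)) by (apply Rdiv_lt_0_compat; lra).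
  assert (Hk : Rabs k < 1) by (rewrite Rabs_right; lra).
  destruct (pow_lt_1_zero k Hk _ Hratio) as [N HN].
  assert (Hfar : forall m n, (N <= m)%nat -> (m <= n)%nat -> d (u m) (u n) < eps).
  { intros m n Hm Hmn.
    pose proof (HN m Hm) as Hkm; rewrite Rabs_right in Hkm by (apply Rle_ge, pow_le; lra).
    assert (M * k ^ m <= M * (eps / (M + 1))) by (apply Rmult_le_compat_l; lra).
    assert (M * (eps / (M + 1)) < eps).
    { apply (Rmult_lt_reg_l (M + 1)); [lra |].
      replace ((M + 1) * (M * (eps / (M + 1)))) with (M * eps) by (field; lra).
      nra. }
    pose proof (dist_le_geometric m n Hmn) as Hmn'; fold M in Hmn'; lra. }
  exists N; intros m n Hm Hn.
  destruct (Nat.le_ge_cases m n).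
  - apply Hfar; auto.
  - rewrite dist_sym; apply Hfar; auto.
Qed.

End GeometricSteps.

End MetricSpace.

Section CiricReichRus.

Context {X : Type} {d : X -> X -> R} {T : X -> X} {alpha lambda : R}.
Hypothesis d_metric : is_metric d.
Hypotheses (alpha_ge0 : 0 <= alpha) (lambda_ge0 : 0 <= lambda).
Hypothesis crr_small : 2 * alpha + 3 * lambda / 2 < 1.
Hypothesis crr : forall x y z : X, x <> y -> y <> z -> x <> z ->
  d (T x) (T y) + d (T y) (T z) + d (T x) (T z) <=
  alpha * (d x y + d y z + d z x) + lambda * (d x (T x) + d y (T y) + d z (T z)).

Definition perimeter (x y z : X) : R := d x y + d y z + d x z.

Lemma crr_fixed_points_at_most_two x y z :
  T x = x -> T y = y -> T z = z -> x = y \/ y = z \/ x = z.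
Proof.
  intros Fx Fy Fz.
  destruct (classic (x = y)) as [| Hxy]; auto;
    destruct (classic (y = z)) as [| Hyz]; auto;
    destruct (classic (x = z)) as [| Hxz]; auto.
  exfalso.
  pose proof (crr x y z Hxy Hyz Hxz) as Hcrr.
  rewrite Fx, Fy, Fz, !(dist_xx d_metric), (dist_sym d_metric z x) in Hcrr.
  pose proof (dist_gt0 d_metric x y Hxy); pose proof (dist_gt0 d_metric y z Hyz);
    pose proof (dist_gt0 d_metric x z Hxz).
  assert (0 < (1 - alpha) * (d x y + d y z + d x z)) by (apply Rmult_lt_0_compat; lra).
  lra.
Qed.

Definition crr_ratio : R := (alpha + lambda) / (1 - lambda / 2).

Lemma crr_ratio_ge0 : 0 <= crr_ratio.
Proof. apply Rle_mult_inv_pos; lra. Qed.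

Lemma crr_ratio_lt1 : crr_ratio < 1.
Proof.
  unfold crr_ratio; apply (Rmult_lt_reg_r (1 - lambda / 2)); [lra |].
  replace ((alpha + lambda) / (1 - lambda / 2) * (1 - lambda / 2)) with (alpha + lambda)
    by (field; lra).
  lra.
Qed.

Lemma perimeter_iterate_le x :
  x <> T x -> T x <> T (T x) -> x <> T (T x) ->
  perimeter (T x) (T (T x)) (T (T (T x))) <= crr_ratio * perimeter x (T x) (T (T x)).
Proof.
  intros Hxy Hyz Hxz; unfold perimeter, crr_ratio.
  pose proof (crr x (T x) (T (T x)) Hxy Hyz Hxz) as Hcrr.
  set (y := T x) in *; set (z := T y) in *; set (w := T z) in *.
  rewrite (dist_sym d_metric z x) in Hcrr.
  (* 2 d(z,w) is bounded by the perimeter of y, z, w *)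
  assert (Hzw : lambda * (d x y + d y z + d z w)
                <= lambda * ((d x y + d y z + d x z) + (d y z + d z w + d y w) / 2)).
  { apply Rmult_le_compat_l; [lra |].
    pose proof (dist_triangle d_metric z y w); rewrite (dist_sym d_metric z y) in *.
    pose proof (dist_ge0 d_metric x z); lra. }
  apply (Rmult_le_reg_l (1 - lambda / 2)); [lra |].
  replace ((1 - lambda / 2) * ((alpha + lambda) / (1 - lambda / 2) * (d x y + d y z + d x z)))
    with ((alpha + lambda) * (d x y + d y z + d x z)) by (field; lra).
  lra.
Qed.

Hypothesis no_period_two : no_prime_period_two T.

Section Orbit.

Variable a : X.
Local Notation u n := (Nat.iter n T a).
Hypothesis orbit_not_fixed : forall n, T (u n) <> u n.

Lemma orbit_perimeter_le n :
  perimeter (u n) (u (S n)) (u (S (S n))) <=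
  crr_ratio ^ n * perimeter a (T a) (T (T a)).
Proof.
  induction n as [|n IH]; [simpl; lra |].
  pose proof (orbit_not_fixed n) as Hn.
  pose proof (perimeter_iterate_le (u n) (not_eq_sym Hn)
                (not_eq_sym (orbit_not_fixed (S n)))
                (not_eq_sym (no_period_two _ Hn))) as Hstep.
  simpl in *.
  pose proof crr_ratio_ge0.
  apply (Rle_trans _ _ _ Hstep); rewrite Rmult_assoc.
  apply Rmult_le_compat_l; assumption.
Qed.

Lemma orbit_cauchy : cauchy_seq d (fun n => u n).
Proof.
  apply (cauchy_of_geometric_steps d_metric (fun n => u n) (perimeter a (T a) (T (T a))) crr_ratio
           crr_ratio_ge0 crr_ratio_lt1).
  intros n; pose proof (orbit_perimeter_le n) as Hn; unfold perimeter in Hn |- *.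
  pose proof (dist_ge0 d_metric (u (S n)) (u (S (S n)))).
  pose proof (dist_ge0 d_metric (u n) (u (S (S n)))).
  lra.
Qed.

Variable l : X.
Hypothesis orbit_to_l : converges_to d (fun n => u n) l.

(* An orbit point equal to l makes l non-fixed, so by (i) the next two
   points differ from l. *)
Lemma orbit_avoids_limit_twice N :
  exists p, (N <= p)%nat /\ u p <> l /\ u (S p) <> l.
Proof.
  assert (Hafter : forall r, u r = l -> u (S r) <> l /\ u (S (S r)) <> l).
  { intros r Hr; pose proof (orbit_not_fixed r) as Hl; rewrite Hr in Hl.
    simpl; rewrite Hr; split; [| apply no_period_two]; assumption. }
  destruct (classic (u N = l)) as [HN | HN].
  - exists (S N); split; [lia | apply Hafter; assumption].
  - destruct (classic (u (S N) = l)) as [HSN | HSN].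
    + exists (S (S N)); split; [lia | apply Hafter; assumption].
    + exists N; auto.
Qed.

Lemma limit_displacement_le eps : 0 < eps ->
  (2 - lambda) * d l (T l) <= (2 + 4 * alpha + 4 * lambda) * eps.
Proof.
  intros Heps.
  destruct (orbit_to_l eps Heps) as [N HN].
  destruct (orbit_avoids_limit_twice N) as [p [Hp [Hpl HSpl]]].
  pose proof (crr l (u p) (u (S p)) (not_eq_sym Hpl)
                (not_eq_sym (orbit_not_fixed p)) (not_eq_sym HSpl)) as Hcrr.
  simpl in Hcrr |- *.
  set (y := u p) in *; set (z := T y) in *; set (w := T z) in *.
  assert (Hy : d y l < eps) by (apply HN; lia).
  assert (Hz : d z l < eps) by (apply (HN (S p)); lia).
  assert (Hw : d w l < eps) by (apply (HN (S (S p))); lia).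
  pose proof (dist_triangle d_metric y l z) as Hyz.
  pose proof (dist_triangle d_metric z l w) as Hzw.
  pose proof (dist_triangle d_metric l z (T l)) as Hlz.
  pose proof (dist_triangle d_metric l w (T l)) as Hlw.
  rewrite !(dist_sym d_metric l) in *.
  rewrite (dist_sym d_metric (T l) z), (dist_sym d_metric (T l) w) in Hcrr.
  assert (alpha * (d y l + d y z + d z l) <= alpha * (4 * eps))
    by (apply Rmult_le_compat_l; lra).
  assert (lambda * (d (T l) l + d y z + d z w) <= lambda * (d (T l) l + 4 * eps))
    by (apply Rmult_le_compat_l; lra).
  pose proof (dist_ge0 d_metric z w).
  lra.
Qed.

Lemma orbit_limit_fixed : T l = l.
Proof.
  assert (Hc : 0 < 2 + 4 * alpha + 4 * lambda) by lra.
  assert (Hle : (2 - lambda) * d l (T l) <= 0).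
  { apply Rle_plus_epsilon; intros eps Heps.
    pose proof (limit_displacement_le (eps / (2 + 4 * alpha + 4 * lambda))
                  (Rdiv_lt_0_compat _ _ Heps Hc)) as H.
    replace ((2 + 4 * alpha + 4 * lambda) * (eps / (2 + 4 * alpha + 4 * lambda)))
      with eps in H by (field; lra).
    lra. }
  assert (Hdist : d l (T l) = 0).
  { pose proof (dist_ge0 d_metric l (T l)).
    apply Rle_antisym; [| assumption].
    apply (Rmult_le_reg_l (2 - lambda)); lra. }
  symmetry; apply d_metric; exact Hdist.
Qed.

End Orbit.

End CiricReichRus.

Theorem theorem3p1 (X : Type) (d : X -> X -> R) (T : X -> X) :
  complete_metric d ->
  at_least_three X ->
  no_prime_period_two T ->
  gen_CRR d T ->
  (exists x, fixed_point T x) /\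
  (forall x y z, fixed_point T x -> fixed_point T y -> fixed_point T z ->
     x = y \/ y = z \/ x = z).
Proof.
  intros [Hmetric Hcomplete] [a _] Hp [alpha [lambda [Ha [Hl [Hsmall Hcrr]]]]].
  split; [| exact (crr_fixed_points_at_most_two Hmetric Hl Hsmall Hcrr)].
  destruct (classic (exists n, T (Nat.iter n T a) = Nat.iter n T a)) as [[n Hn] | Hnone].
  { exists (Nat.iter n T a); exact Hn. }
  assert (Horbit : forall n, T (Nat.iter n T a) <> Nat.iter n T a)
    by (intros n Hn; apply Hnone; exists n; exact Hn).
  destruct (Hcomplete _ (orbit_cauchy Hmetric Ha Hl Hsmall Hcrr Hp a Horbit)) as [l Hlim].
  exists l; exact (orbit_limit_fixed Hmetric Ha Hl Hsmall Hcrr Hp a Horbit l Hlim).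
Qed.
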